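(* Let $\tilde Q$ be the subgroup of $Q_C$ generated by the images of $A_1,\dots,A_m$. Then $\tilde Q$ is a malnormal subgroup of $Q_C$, i.e. for every $g\in Q_C\setminus\tilde Q$ one has $g^{-1}\tilde Qg\cap\tilde Q=\{1\}$.
   Context: Let $Q$ be a finitely generated recursively presented group with presentation $\langle Y\mid\mathcal{S}\rangle$, where $Y=\{y_1,\dots,y_m\}$ is finite, $\mathcal{S}$ is a recursive set of positive words over $Y$, and the empty word is not in $\mathcal{S}$. Let $C\ge1$ be an integer. For $i=1,\dots,m$ let $Y_{C,i}=\{a_{1,i},\dots,a_{C,i}\}$, $Y_C=\bigcup_iY_{C,i}$ (all letters distinct), $A_i=a_{1,i}\cdots a_{C,i}\in F(Y_C)$. For $r=r(y_1,\dots,y_m)\in\mathcal{S}$ let $r_C=r(A_1,\dots,A_m)$, $\mathcal{S}_C=\{r_C:r\in\mathcal{S}\}$, and $Q_C=\langle Y_C\mid\mathcal{S}_C\rangle$. *)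

From mathcomp Require Import all_boot.
Set Implicit Arguments. Unset Strict Implicit. Unset Printing Implicit Defensive.

(* Group presentations, modelled at the level of words.
   A word over an alphabet X is a sequence of signed letters (x, b),
   where b = false means x and b = true means x^-1. *)
Definition word (X : Type) := seq (X * bool).

Definition winv {X : Type} (w : word X) : word X :=
  rev [seq (p.1, ~~ p.2) | p <- w].

(* Its classes are exactly the
   elements of the presented group F(X)/<<R>>. *)
Inductive pres_eq {X : Type} (R : word X -> Prop) : word X -> word X -> Prop :=
| pe_refl w : pres_eq R w w
| pe_sym u v : pres_eq R u v -> pres_eq R v u
| pe_trans u v w : pres_eq R u v -> pres_eq R v w -> pres_eq R u w
| pe_free u v x b : pres_eq R (u ++ (x, b) :: (x, ~~ b) :: v) (u ++ v)
| pe_rel u v r : R r -> pres_eq R (u ++ r ++ v) (u ++ v).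

(* Q_C: letters a_{j,i} are pairs (j, i) : 'I_C * 'I_m. *)
Definition A_word (C m : nat) (i : 'I_m) : word ('I_C * 'I_m) :=
  [seq ((j, i), false) | j <- enum 'I_C].

Definition relC (C m : nat) (r : seq 'I_m) : word ('I_C * 'I_m) :=
  flatten [seq @A_word C m i | i <- r].

Definition S_C (C m : nat) (S : pred (seq 'I_m)) : word ('I_C * 'I_m) -> Prop :=
  fun w => exists2 r, S r & w = @relC C m r.

Definition QC_eq (C m : nat) (S : pred (seq 'I_m)) :=
  pres_eq (@S_C C m S).

Definition A_expand (C m : nat) (s : seq ('I_m * bool)) : word ('I_C * 'I_m) :=
  flatten [seq (if p.2 then winv (@A_word C m p.1) else @A_word C m p.1) | p <- s].

Definition in_tildeQ (C m : nat) (S : pred (seq 'I_m)) (w : word ('I_C * 'I_m)) : Prop :=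
  exists s : seq ('I_m * bool), @QC_eq C m S w (@A_expand C m s).

From mathcomp Require Import all_boot.
From Stdlib Require Import ClassicalEpsilon FunctionalExtensionality PropExtensionality.
Set Implicit Arguments. Unset Strict Implicit. Unset Printing Implicit Defensive.

(* Taking A_i in place of a_{1,i} as a generator exhibits Q_C as the free
   product of Q = <y_i | S> (y_i = A_i) with the free group on the a_{j,i},
   j >= 2, and tilde Q is the factor Q.  Q_C acts on van der Waerden normal
   forms: alternating sequences of nontrivial elements of Q and of free
   letters that do not cancel.  If g is not in tilde Q, its normal form has
   two syllables or starts with a free letter; left multiplication by a
   nontrivial h in tilde Q then changes the first syllable, whereas right
   multiplication by an element of tilde Q does not, so h g <> g h'. *)

Definition letter_inv (X : Type) (l : X * bool) : X * bool := (l.1, ~~ l.2).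

Lemma letter_invK (X : Type) : involutive (@letter_inv X).
Proof. by case=> x b; rewrite /letter_inv /= negbK. Qed.

Section PresentedGroup.
Variables (X : Type) (R : word X -> Prop).
Local Notation peq := (pres_eq R).

Lemma pe_catl a u v : peq u v -> peq (a ++ u) (a ++ v).
Proof.
elim=> {u v} [w|u v _ IH|u v w _ IH1 _ IH2|u v x b|u v r Rr].
- exact: pe_refl.
- exact: pe_sym.
- exact: pe_trans IH1 IH2.
- by rewrite !catA; apply: pe_free.
- by rewrite !catA -(catA _ r); apply: pe_rel.
Qed.

Lemma pe_catr b u v : peq u v -> peq (u ++ b) (v ++ b).
Proof.
elim=> {u v} [w|u v _ IH|u v w _ IH1 _ IH2|u v x c|u v r Rr].
- exact: pe_refl.
- exact: pe_sym.
- exact: pe_trans IH1 IH2.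
- by rewrite -!catA; apply: pe_free.
- by rewrite -!catA; apply: pe_rel.
Qed.

Lemma pe_relator r : R r -> peq r [::].
Proof. by move=> Rr; have := pe_rel [::] [::] Rr; rewrite cats0. Qed.

Lemma winv_cons (l : X * bool) w : winv (l :: w) = winv w ++ [:: letter_inv l].
Proof. by rewrite /winv map_cons rev_cons cats1. Qed.

Lemma winvK : involutive (@winv X).
Proof.
move=> w; rewrite /winv map_rev revK -map_comp.
by elim: w => [|[x b] w IH] //=; rewrite negbK IH.
Qed.

Lemma pe_winvr w : peq (w ++ winv w) [::].
Proof.
elim: w => [|[x b] w IH]; first exact: pe_refl.
rewrite winv_cons catA.
apply: pe_trans (pe_catr _ (pe_catl [:: (x, b)] IH)) _.
exact: (pe_free R [::] [::] x b).
Qed.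

Lemma pe_winvl w : peq (winv w ++ w) [::].
Proof. by have := pe_winvr (winv w); rewrite winvK. Qed.

Lemma pe_winv_mid a w b : peq (a ++ w ++ winv w ++ b) (a ++ b).
Proof. by apply: pe_catl; rewrite catA -[b in peq _ b]cat0s; apply: pe_catr; apply: pe_winvr. Qed.

Lemma pe_cancelr t w : peq (t ++ w) w -> peq t [::].
Proof.
move=> tw_w; apply: pe_trans (_ : peq ((t ++ w) ++ winv w) _).
  by apply: pe_sym; rewrite -catA; have := pe_winv_mid t w [::]; rewrite !cats0.
exact: pe_trans (pe_catr _ tw_w) (pe_winvr w).
Qed.

(* Equality in a presented group need not be decidable, so canonical
   representatives are chosen classically. *)
Definition rep (u : word X) : word X := epsilon (inhabits [::]) (peq u).

Lemma rep_spec u : peq u (rep u).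
Proof. exact: epsilon_spec (ex_intro _ u (pe_refl R u)). Qed.

Lemma rep_eq u v : peq u v -> rep u = rep v.
Proof.
move=> uv; rewrite /rep; congr epsilon.
apply: functional_extensionality => w; apply: propositional_extensionality.
by split=> [/(pe_trans (pe_sym uv))|/(pe_trans uv)].
Qed.

Lemma eq_rep_pres u v : rep u = rep v -> peq u v.
Proof. by move=> ruv; apply: pe_trans (rep_spec u) _; rewrite ruv; apply: pe_sym; apply: rep_spec. Qed.

Lemma repK u : rep (rep u) = rep u.
Proof. by apply: rep_eq; apply: pe_sym; apply: rep_spec. Qed.

Lemma rep_catr u w : rep (u ++ rep w) = rep (u ++ w).
Proof. by apply: rep_eq; apply: pe_catl; apply: pe_sym; apply: rep_spec. Qed.

End PresentedGroup.

Section FreeProductNormalForm.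
Variables (Y Z : eqType) (R : word Y -> Prop).
Local Notation peq := (pres_eq R).
Local Notation rep := (rep R).
Local Notation one := (rep [::]).

Definition syl := (word Y + (Z * bool))%type.

Definition normal_syl (s : syl) : bool :=
  if s is inl w then (rep w == w) && (w != one) else true.

Definition syl_link (s s' : syl) : bool :=
  match s, s' with
  | inl _, inl _ => false
  | inr l, inr l' => l' != letter_inv l
  | _, _ => true
  end.

Definition reduced (x : seq syl) : bool := all normal_syl x && sorted syl_link x.

Definition consG (v : word Y) (x : seq syl) : seq syl :=
  if v == one then x else inl v :: x.

Definition mulG (u : word Y) (x : seq syl) : seq syl :=
  if x is inl w :: x' then consG (rep (u ++ w)) x' else consG (rep u) x.

Definition mulF (l : Z * bool) (x : seq syl) : seq syl :=
  if x is inr l' :: x' then (if l' == letter_inv l then x' else inr l :: x)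
  else inr l :: x.

Definition mulFw (w : word Z) (x : seq syl) : seq syl := foldr mulF x w.

Definition in_factorG (x : seq syl) : bool :=
  match x with [::] | [:: inl _] => true | _ => false end.

Definition headG (x : seq syl) : bool := if x is inl _ :: _ then true else false.

Lemma reduced_cons s x : reduced (s :: x) =
  [&& normal_syl s, (if x is s' :: _ then syl_link s s' else true) & reduced x].
Proof.
rewrite /reduced /=; case: x => [|s' x] /=; first by rewrite !andbT.
by case: (normal_syl s); case: (syl_link s s'); case: (normal_syl s'); case: (all _ x).
Qed.

Lemma reduced_rcons a s : reduced (rcons a s) =
  [&& reduced a, normal_syl s & nilp a || syl_link (last s a) s].
Proof.
rewrite /reduced all_rcons; case: a => [|s0 a] /=; first by rewrite !andbT.
by rewrite rcons_path -!andbA; do !bool_congr.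
Qed.

Lemma reduced_inl w x : reduced (inl w :: x) ->
  [/\ rep w = w, w != one, reduced x & ~~ headG x].
Proof.
rewrite reduced_cons => /and3P [/andP [/eqP rw w1] link rx].
by split=> //; case: x link {rx} => [|[]].
Qed.

Lemma normal_rep v : rep v != one -> normal_syl (inl (rep v)).
Proof. by rewrite /= repK eqxx. Qed.

Lemma consG_reduced v x : reduced x -> ~~ headG x -> reduced (consG (rep v) x).
Proof.
rewrite /consG => rx; case: eqP => // /eqP v1 hd.
by rewrite reduced_cons /= repK eqxx v1 rx andbT; case: x hd {rx} => [|[]].
Qed.

Lemma mulG_reduced u x : reduced x -> reduced (mulG u x).
Proof.
case: x => [|[w|l] x] rx; try exact: consG_reduced.
by have [_ _ rx' hd] := reduced_inl rx; apply: consG_reduced.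
Qed.

Lemma mulF_reduced l x : reduced x -> reduced (mulF l x).
Proof.
case: x => [|[w|l'] x] //=; rewrite reduced_cons => /and3P [_ link rx].
by case: eqP => [_ //|/eqP l'l]; rewrite !reduced_cons /= l'l link rx.
Qed.

Lemma mul1G x : reduced x -> mulG [::] x = x.
Proof.
case: x => [|[w|l] x] rx; rewrite /mulG /consG ?eqxx //.
by have [-> /negbTE -> _ _] := reduced_inl rx.
Qed.

Lemma eq_mulG u v x : peq u v -> mulG u x = mulG v x.
Proof.
by move=> uv; case: x => [|[w|l] x] /=; rewrite ?(rep_eq (pe_catr w uv)) ?(rep_eq uv).
Qed.

Lemma mulG_consG u v x : ~~ headG x -> mulG u (consG (rep v) x) = consG (rep (u ++ v)) x.
Proof.
rewrite /consG; case: eqP => [v1|_] hd; last by rewrite /= rep_catr.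
by rewrite -rep_catr v1 rep_catr cats0; case: x hd => [|[]].
Qed.

Lemma mulG_cat u v x : reduced x -> mulG u (mulG v x) = mulG (u ++ v) x.
Proof.
case: x => [|[w|l] x] rx; try exact: mulG_consG.
by have [_ _ _ hd] := reduced_inl rx; rewrite /= mulG_consG // catA.
Qed.

Lemma mulGK y b x : reduced x -> mulG [:: (y, b)] (mulG [:: (y, ~~ b)] x) = x.
Proof. by move=> rx; rewrite mulG_cat // (eq_mulG _ (pe_free R [::] [::] y b)) mul1G. Qed.

Lemma mulFK l x : reduced x -> mulF (letter_inv l) (mulF l x) = x.
Proof.
case: x => [|[w|l'] x] /=; rewrite ?letter_invK ?eqxx //.
rewrite reduced_cons => /and3P [_ link _].
case: eqP => [l'E|_] /=; last by rewrite letter_invK eqxx.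
by case: x link => [|[w|l''] x] //=; rewrite l'E => // /negbTE ->.
Qed.

Lemma mulFw_reduced w x : reduced x -> reduced (mulFw w x).
Proof. by move=> rx; elim: w => [|l w IH] //=; apply: mulF_reduced. Qed.

Lemma mulFw_cat u v x : mulFw (u ++ v) x = mulFw u (mulFw v x).
Proof. exact: foldr_cat. Qed.

Lemma mulFwK w x : reduced x -> mulFw (winv w) (mulFw w x) = x.
Proof.
elim: w x => [|l w IH] x rx //=.
by rewrite winv_cons mulFw_cat /= mulFK ?IH ?mulFw_reduced.
Qed.

Lemma mulG_cons w x : reduced (inl w :: x) -> mulG w x = inl w :: x.
Proof.
move=> /reduced_inl [rw w1 _ hd].
by case: x hd => [|[w'|l] x] // _; rewrite /= /consG rw (negbTE w1).
Qed.

Lemma mulF_cons l x : reduced (inr l :: x) -> mulF l x = inr l :: x.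
Proof.
rewrite reduced_cons => /and3P [_ link _].
by case: x link => [|[w|l'] x] //= /negbTE ->.
Qed.

Lemma reduced_cat_mulG a u : reduced a -> ~~ headG (rev a) -> reduced (a ++ mulG u [::]).
Proof.
rewrite /= /consG => ra; case: eqP => [_|/eqP u1]; first by rewrite cats0.
rewrite cats1 reduced_rcons ra normal_rep //=.
by case/lastP: a {ra} => [|a [w|l]] //; rewrite last_rcons rev_rcons //= orbT.
Qed.

Lemma reduced_rcons_inl a w : reduced (rcons a (inl w)) -> reduced a && ~~ headG (rev a).
Proof.
rewrite reduced_rcons => /and3P [-> _].
by case/lastP: a => [|a [w'|l]] //; rewrite last_rcons rev_rcons /nilp size_rcons.
Qed.

Lemma mulG_ohead u x : reduced x -> ~~ in_factorG x -> rep u != one ->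
  ohead (mulG u x) <> ohead x.
Proof.
case: x => [|[w|l] x] //= rx; last by move=> _ u1; rewrite /consG (negbTE u1).
case: x rx => [|s x] // /reduced_inl [rw _ _ hd] _ u1.
rewrite /consG; case: eqP => [_|_ [uw]]; first by case: s hd.
case/negP: u1; apply/eqP/rep_eq/(@pe_cancelr _ _ _ w)/eq_rep_pres.
by rewrite uw rw.
Qed.

End FreeProductNormalForm.

Section QCNormalForm.
Variables (m C' : nat) (S : pred (seq 'I_m)).
Local Notation C := C'.+1.
Local Notation L := ('I_C * 'I_m)%type.
Local Notation F := ('I_C' * 'I_m)%type.
(* The letter (j, i) : L is a_{j+1,i}; the free letter (j, i) : F is a_{j+2,i}. *)
Local Notation QC := (@QC_eq C m S).

Definition pos_word (r : seq 'I_m) : word 'I_m := [seq (i, false) | i <- r].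
Definition relQ (w : word 'I_m) : Prop := exists2 r, S r & w = pos_word r.
Local Notation QY := (pres_eq relQ).
Local Notation syl := (syl 'I_m F).
Local Notation reduced := (reduced relQ).
Local Notation mulG := (mulG relQ).

Lemma A_expand_cat (u v : word 'I_m) : A_expand C (u ++ v) = A_expand C u ++ A_expand C v.
Proof. by rewrite /A_expand map_cat flatten_cat. Qed.

Lemma A_expand_pos_word r : A_expand C (pos_word r) = relC C r.
Proof. by rewrite /A_expand /relC /pos_word -map_comp. Qed.

Lemma A_expand_pres (u v : word 'I_m) : QY u v -> QC (A_expand C u) (A_expand C v).
Proof.
elim=> {u v} [w|u v _ IH|u v w _ IH1 _ IH2|u v i b|u v r [r0 Sr0 ->]].
- exact: pe_refl.
- exact: pe_sym.
- exact: pe_trans IH1 IH2.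
- rewrite !A_expand_cat; apply: pe_catl; rewrite /A_expand /= catA.
  rewrite -[X in pres_eq _ _ X]cat0s; apply: pe_catr.
  by case: b => /=; [apply: pe_winvl | apply: pe_winvr].
- by rewrite !A_expand_cat A_expand_pos_word; apply: pe_rel; exists r0.
Qed.

Definition liftF (l : F * bool) : L * bool := ((lift ord0 l.1.1, l.1.2), l.2).

Definition tailA (i : 'I_m) : word F := [seq ((j, i), false) | j <- enum 'I_C'].

Lemma A_word_split i : A_word C i = ((ord0, i), false) :: map liftF (tailA i).
Proof. by rewrite /A_word /tailA enum_ordSl /= -!map_comp. Qed.

Lemma winv_map_liftF w : winv (map liftF w) = map liftF (winv w).
Proof. by rewrite /winv map_rev -!map_comp. Qed.

(* a_{1,i} = A_i (a_{2,i} ... a_{C,i})^-1 *)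
Definition act_letter (l : L * bool) (x : seq syl) : seq syl :=
  let: ((j, i), b) := l in
  if unlift ord0 j is Some j' then mulF ((j', i), b) x
  else if b then mulFw (tailA i) (mulG [:: (i, true)] x)
  else mulG [:: (i, false)] (mulFw (winv (tailA i)) x).

Definition act (w : word L) (x : seq syl) : seq syl := foldr act_letter x w.

Definition syl_word (s : syl) : word L :=
  match s with inl w => A_expand C w | inr l => [:: liftF l] end.

Definition nf (x : seq syl) : word L := flatten (map syl_word x).

Lemma act_cat u v x : act (u ++ v) x = act u (act v x).
Proof. exact: foldr_cat. Qed.

Lemma act_letter_reduced l x : reduced x -> reduced (act_letter l x).
Proof.
case: l => [[j i] b] rx /=; case: unliftP => [j' _|_]; first exact: mulF_reduced.
by case: b; [apply/mulFw_reduced/mulG_reduced | apply/mulG_reduced/mulFw_reduced].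
Qed.

Lemma act_reduced w x : reduced x -> reduced (act w x).
Proof. by move=> rx; elim: w => [|l w IH] //=; apply: act_letter_reduced. Qed.

Lemma act_map_liftF w x : act (map liftF w) x = mulFw w x.
Proof. by elim: w => [|l w IH] //=; rewrite IH liftK; case: l => -[]. Qed.

Lemma act_letterK l x : reduced x -> act_letter (letter_inv l) (act_letter l x) = x.
Proof.
case: l => [[j i] b] rx /=; case: unliftP => [j' _|_].
- by have := mulFK ((j', i), b) rx.
- case: b => /=.
  + by rewrite (@mulFwK _ _ relQ) ?mulG_reduced // (mulGK i false).
  + by rewrite (mulGK i true) ?mulFw_reduced // -{1}(winvK (tailA i)) (@mulFwK _ _ relQ).
Qed.

Lemma act_winv w x : reduced x -> act (winv w) (act w x) = x.
Proof.
elim: w x => [|l w IH] x rx //=.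
rewrite winv_cons act_cat -[act [:: _] _]/(act_letter _ _).
by rewrite act_letterK ?act_reduced ?IH.
Qed.

Lemma act_A_word i x : reduced x -> act (A_word C i) x = mulG [:: (i, false)] x.
Proof. by move=> rx; rewrite A_word_split /= act_map_liftF unlift_none (@mulFwK _ _ relQ). Qed.

Lemma act_A_word_inv i x : reduced x -> act (winv (A_word C i)) x = mulG [:: (i, true)] x.
Proof.
move=> rx; rewrite -{1}(mulGK i false rx) -act_A_word ?mulG_reduced //.
by rewrite act_winv ?mulG_reduced.
Qed.

Lemma act_A_expand s x : reduced x -> act (A_expand C s) x = mulG s x.
Proof.
elim: s x => [|[i b] s IH] x rx /=; first by rewrite mul1G.
rewrite act_cat -/(A_expand C s) IH // -[(i, b) :: s]/([:: (i, b)] ++ s) -mulG_cat //.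
by case: b; [apply: act_A_word_inv | apply: act_A_word]; apply: mulG_reduced.
Qed.

Lemma act_sound u v x : QC u v -> reduced x -> act u x = act v x.
Proof.
move=> uv; elim: uv x => {u v} [w|u v _ IH|u v w _ IH1 _ IH2|u v l b|u v r [r0 Sr0 ->]] x rx.
- by [].
- by rewrite IH.
- by rewrite IH1 ?IH2.
- rewrite !act_cat /=.
  by have := act_letterK (l, ~~ b) (act_reduced v rx); rewrite /= negbK => ->.
- rewrite !act_cat -A_expand_pos_word act_A_expand ?act_reduced //.
  by rewrite (eq_mulG _ (pe_relator (ex_intro2 _ _ r0 Sr0 erefl))) mul1G ?act_reduced.
Qed.

Lemma nf_cons s x : nf (s :: x) = syl_word s ++ nf x.
Proof. by []. Qed.

Lemma nf_rcons a s : nf (rcons a s) = nf a ++ syl_word s.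
Proof. by rewrite /nf map_rcons -cats1 flatten_cat /= cats0. Qed.

Lemma mulF_nf l x : QC (liftF l :: nf x) (nf (mulF l x)).
Proof.
case: x => [|[w|l'] x] /=; try exact: pe_refl.
case: eqP => [->|_]; last exact: pe_refl.
by case: l => f b; apply: (pe_free _ [::] (nf x) _ b).
Qed.

Lemma consG_nf v x : QC (A_expand C v ++ nf x) (nf (consG relQ v x)).
Proof.
rewrite /consG; case: eqP => [->|_]; last exact: pe_refl.
rewrite -[X in QC _ X]cat0s; apply/pe_catr/(@A_expand_pres _ [::]).
exact/pe_sym/rep_spec.
Qed.

Lemma mulG_nf u x : QC (A_expand C u ++ nf x) (nf (mulG u x)).
Proof.
case: x => [|[w|l] x]; apply: pe_trans (consG_nf _ _);
  try exact/pe_catr/A_expand_pres/rep_spec.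
by rewrite nf_cons catA -A_expand_cat; apply/pe_catr/A_expand_pres/rep_spec.
Qed.

Lemma mulFw_nf w x : QC (map liftF w ++ nf x) (nf (mulFw w x)).
Proof.
elim: w => [|l w IH]; first exact: pe_refl.
exact: pe_trans (pe_catl [:: liftF l] IH) (mulF_nf _ _).
Qed.

Lemma act_letter_nf l x : QC (l :: nf x) (nf (act_letter l x)).
Proof.
case: l => [[j i] b] /=; case: unliftP => [j' -> | ->]; first exact: (mulF_nf ((j', i), b)).
case: b.
- apply: pe_trans (mulFw_nf _ _); apply: pe_trans (pe_catl _ (mulG_nf _ _)).
  rewrite /A_expand /= cats0 A_word_split winv_cons -!catA.
  exact/pe_sym/(pe_winv_mid _ [::]).
- apply: pe_trans (mulG_nf _ _); rewrite /A_expand /= cats0 A_word_split /=.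
  apply: (pe_catl [:: _]); apply: pe_trans (pe_catl _ (mulFw_nf _ _)).
  by rewrite -winv_map_liftF; apply/pe_sym/(pe_winv_mid _ [::]).
Qed.

Lemma act_nf w x : QC (w ++ nf x) (nf (act w x)).
Proof.
elim: w => [|l w IH]; first exact: pe_refl.
exact: pe_trans (pe_catl [:: l] IH) (act_letter_nf _ _).
Qed.

Lemma act_nf_cat p y : reduced (p ++ y) -> act (nf p) y = p ++ y.
Proof.
elim: p => [|s p IH] //= rpy.
have rpy' : reduced (p ++ y) by move: rpy; rewrite reduced_cons => /and3P [].
rewrite act_cat IH //; case: s rpy => [w|[[j i] b]] rpy /=.
- by rewrite act_A_expand // mulG_cons.
- by rewrite liftK (@mulF_cons _ _ relQ).
Qed.

Lemma act_nf_mulG_ohead p u : reduced p -> ~~ in_factorG p ->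
  ohead (act (nf p) (mulG u [::])) = ohead p.
Proof.
case/lastP: p => [|p [w|l]] // rp notG.
- have /andP [rp' hd] := reduced_rcons_inl rp.
  rewrite nf_rcons act_cat [syl_word _]/= act_A_expand ?mulG_reduced //.
  rewrite mulG_cat // act_nf_cat ?reduced_cat_mulG //.
  by case: p notG {rp rp' hd}.
- rewrite act_nf_cat ?reduced_cat_mulG ?rev_rcons //.
  by case: p {rp notG}.
Qed.

End QCNormalForm.

Theorem lemma3p5 (m C : nat) (S : pred (seq 'I_m)) :
  0 < C ->
  ~~ S [::] ->
  forall g : word ('I_C * 'I_m),
    ~ @in_tildeQ C m S g ->
    forall h : word ('I_C * 'I_m),
      @in_tildeQ C m S h ->
      @in_tildeQ C m S (winv g ++ h ++ g) ->
      @QC_eq C m S h [::].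
Proof.
case: C => [//|C'] _ _ g g_notin h [t h_t] [t' conj_t'].
pose p := act S g [::].
have red_p : reduced (relQ S) p by apply: act_reduced.
have g_p : QC_eq S g (nf p) by have := act_nf S g [::]; rewrite cats0.
have notG_p : ~~ in_factorG p.
  apply: contra_notN g_notin; case: (p) g_p => [|[w|l] [|s p']] // g_p _.
  - by exists [::].
  - by exists w; rewrite /nf /= cats0 in g_p.
have [t1|t_ne1] := eqVneq (rep (relQ S) t) (rep (relQ S) [::]).
  exact: pe_trans h_t (A_expand_pres C' (eq_rep_pres t1)).
have hg : QC_eq S (h ++ g) (g ++ A_expand C'.+1 t').
  apply: pe_trans (pe_catl g conj_t').
  exact: pe_sym (pe_winv_mid _ [::] g (h ++ g)).
have := act_sound hg (erefl : reduced (relQ S) [::]); rewrite !act_cat -/p.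
rewrite (act_sound h_t red_p) (act_sound g_p) ?act_A_expand ?mulG_reduced //.
move/(congr1 ohead); rewrite act_nf_mulG_ohead //.
by move/(mulG_ohead red_p notG_p t_ne1).
Qed.
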